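(* Let $m$ be an odd positive integer. If $K^*_{2m}$ admits a $\vec{C}_m$-factorization, then $K^*_{6m}$ admits a $\vec{C}_{3m}$-factorization.
   Context: $K^*_n$ denotes the complete symmetric digraph on $n$ vertices (both arcs $(u,v),(v,u)$ for all distinct $u,v$; no loops). A $\vec{C}_\ell$-factor of a digraph is a spanning subdigraph that is a disjoint union of directed cycles of length $\ell$; a $\vec{C}_\ell$-factorization is a partition of the arc set into $\vec{C}_\ell$-factors. *)

From mathcomp Require Import all_boot.
Set Implicit Arguments. Unset Strict Implicit. Unset Printing Implicit Defensive.

Definition Kstar_arcs (n : nat) : {set 'I_n * 'I_n} :=
  [set a : 'I_n * 'I_n | a.1 != a.2].

(* A directed cycle is given by its cyclic vertex sequence c = [v0;...;v_{l-1}]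
   (distinct vertices); its arcs are (v_i, v_{i+1 mod l}). *)
Definition dicycle_arcs (T : finType) (c : seq T) : {set T * T} :=
  [set (x, next c x) | x in c].

Definition is_dicycle (T : finType) (l : nat) (c : seq T) : bool :=
  uniq c && (size c == l).

Definition is_Cfactor (T : finType) (l : nat) (A F : {set T * T}) : Prop :=
  exists cs : seq (seq T),
    [/\ all (is_dicycle l) cs,
        (forall v : T, count (fun c => v \in c) cs = 1),
        F = \bigcup_(c <- cs) dicycle_arcs c
      & F \subset A].

Definition has_Cfactorization (T : finType) (l : nat) (A : {set T * T}) : Prop :=
  exists Fs : seq {set T * T},
    (forall F, F \in Fs -> is_Cfactor l A F) /\
    (forall a, a \in A -> count (fun F : {set T * T} => a \in F) Fs = 1).

From mathcomp Require Import all_boot zify.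
Set Implicit Arguments. Unset Strict Implicit. Unset Printing Implicit Defensive.

(** A C_m-factor of K*_n is the arc set of a permutation of the vertices all of
    whose cycles have length m.  Put the 6m vertices of K*_(6m) on three levels
    over the vertex set V of K*_(2m).  For each factor f but one, the arcs
    (i, x) -> (j, f x) are covered by three voltage lifts
    (i, x) |-> (i + w_t(x), f x): the lift of an m-cycle of f is a single
    3m-cycle as soon as the voltages along the cycle add up to a unit of Z/3.
    The remaining factor f0, together with the arcs (i, x) -> (j, x) inside the
    levels, is covered by five explicit factors.  That every cycle of one of
    these maps has length 3m is certified by an index into Z/3m which the map
    increments by one. *)

(** * Cycle factors as semiregular permutations *)

Definition semiregular (T : finType) (l : nat) (g : T -> T) : Prop :=
  injective g /\ forall x, order g x = l.

Definition fun_arcs (T : finType) (g : T -> T) : {set T * T} := [set a | g a.1 == a.2].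

Lemma in_fun_arcs (T : finType) (g : T -> T) (a : T * T) :
  (a \in fun_arcs g) = (g a.1 == a.2).
Proof. by rewrite inE. Qed.

(* Junk value: [fsucc F x = x] when no arc of [F] leaves [x]. *)
Definition fsucc (T : finType) (F : {set T * T}) (x : T) : T :=
  odflt x [pick y | (x, y) \in F].

Lemma fconnect_iterP (T : finType) (f : T -> T) x y :
  reflect (exists n, y = iter n f x) (fconnect f x y).
Proof.
apply: (iffP idP) => [xy | [n ->]]; last exact: fconnect_iter.
by exists (findex f x y); rewrite iter_findex.
Qed.

Lemma order_gt1 (T : finType) (f : T -> T) x : (1 < order f x) = (f x != x).
Proof.
apply/idP/idP => [| fx].
  apply: contraTneq => fx; rewrite -leqNgt /order.
  rewrite (eq_card (B := pred1 x)) ?card1 // => y; rewrite !inE.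
  apply/fconnect_iterP/eqP => [[n ->] | ->]; last by exists 0.
  by rewrite iter_fix.
apply: (@leq_trans #|[set x; f x]|); first by rewrite cards2 eq_sym fx.
by apply/subset_leq_card/subsetP => y; rewrite !inE => /orP [] /eqP ->;
  [exact: connect0 | exact: fconnect1].
Qed.

Lemma mem_bigcup_seq (T : finType) (I : Type) (s : seq I) (G : I -> {set T}) a :
  (a \in \bigcup_(i <- s) G i) = has (fun i => a \in G i) s.
Proof.
elim: s => [|i s IH]; first by rewrite big_nil inE.
by rewrite big_cons inE IH.
Qed.

Lemma count1_eq (T : eqType) (P : pred T) (s : seq T) a b :
  count P s = 1 -> a \in s -> b \in s -> P a -> P b -> a = b.
Proof.
move=> P1 sa sb Pa Pb.
have: a \in filter P s by rewrite mem_filter Pa.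
have: b \in filter P s by rewrite mem_filter Pb.
rewrite -size_filter in P1.
by case: (filter P s) P1 => [|z [|]] //= _; rewrite !inE => /eqP -> /eqP ->.
Qed.

Lemma Cfactor_fun_arcs (T : finType) (l : nat) (A : {set T * T}) (g : T -> T) :
  semiregular l g -> fun_arcs g \subset A -> is_Cfactor l A (fun_arcs g).
Proof.
move=> [ginj gord] gA.
have fsym := fconnect_sym ginj.
exists [seq orbit g r | r <- enum (froots g)]; split => //.
- apply/allP => c /mapP [r _ ->].
  by rewrite /is_dicycle orbit_uniq size_orbit gord eqxx.
- move=> v; rewrite count_map.
  rewrite (@eq_in_count _ _ (pred1 (froot g v))) => [|r].
    by rewrite count_uniq_mem ?enum_uniq // mem_enum unfold_in (root_root fsym) eqxx.
  rewrite mem_enum /= -fconnect_orbit inE => /eqP rr.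
  apply/idP/eqP => [/(rootP fsym) <- // | ->].
  by rewrite fsym connect_root.
- apply/setP => a; rewrite big_map big_enum in_fun_arcs.
  apply/eqP/bigcupP => [ga | [r _ /imsetP [x xr ->]]].
    exists (froot g a.1); first by rewrite unfold_in (root_root fsym) eqxx.
    have ar : a.1 \in orbit g (froot g a.1).
      by rewrite -fconnect_orbit fsym connect_root.
    by apply/imsetP; exists a.1; rewrite // (nextE (cycle_orbit ginj _) ar) ga -surjective_pairing.
  by rewrite (nextE (cycle_orbit ginj _) xr).
Qed.

Lemma Cfactor_semiregular (T : finType) (l : nat) (A F : {set T * T}) :
  is_Cfactor l A F -> semiregular l (fsucc F) /\ F = fun_arcs (fsucc F).
Proof.
move=> [cs [cs_cycles cs_cover F_def _]].
pose cyc x := nth [::] cs (find (fun c => x \in c) cs).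
have has_cyc x : has (fun c => x \in c) cs by rewrite has_count cs_cover.
have cyc_cs x : cyc x \in cs by rewrite mem_nth // -has_find.
have cyc_x x : x \in cyc x by apply: (nth_find [::] (has_cyc x)).
have cycE x c : c \in cs -> x \in c -> c = cyc x.
  by move=> cs_c xc; apply: (count1_eq (cs_cover x)).
have cyc_uniq x : uniq (cyc x) by case/andP: (allP cs_cycles _ (cyc_cs x)).
have cyc_size x : size (cyc x) = l by case/andP: (allP cs_cycles _ (cyc_cs x)) => _ /eqP.
have arcsE x y : ((x, y) \in F) = (next (cyc x) x == y).
  rewrite F_def mem_bigcup_seq; apply/hasP/eqP => [[c cs_c /imsetP [z zc [-> ->]]] | <-].
    by rewrite -(cycE z c).
  by exists (cyc x) => //; apply/imsetP; exists x.
have fsuccE x : fsucc F x = next (cyc x) x.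
  rewrite /fsucc; case: pickP => [y | /(_ (next (cyc x) x))].
    by rewrite arcsE => /eqP.
  by rewrite arcsE eqxx.
have cyc_next x : cyc (next (cyc x) x) = cyc x by rewrite -(cycE _ (cyc x)) // mem_next.
split; last by apply/setP => -[x y]; rewrite arcsE in_fun_arcs fsuccE.
split => [x y | x].
  rewrite !fsuccE => exy; have cyc_xy : cyc x = cyc y by rewrite -cyc_next exy cyc_next.
  by rewrite -(prev_next (cyc_uniq x) x) exy cyc_xy prev_next.
rewrite -(cyc_size x); apply: (order_cycle _ (cyc_uniq x) (cyc_x x)).
apply: cycle_from_next => // y /(cycE y _ (cyc_cs x)) xy.
by rewrite /= fsuccE -xy.
Qed.

Lemma Cfactor_length_gt1 (T : finType) (x : T) (l : nat) (F : {set T * T}) :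
  is_Cfactor l [set a : T * T | a.1 != a.2] F -> 1 < l.
Proof.
move=> Ffac; have [[_ fsucc_order] F_def] := Cfactor_semiregular Ffac.
have [_ [_ _ _ F_loopless]] := Ffac.
have : (x, fsucc F x) \in F by rewrite [in X in _ \in X]F_def in_fun_arcs.
by move/(subsetP F_loopless); rewrite inE eq_sym -order_gt1 fsucc_order.
Qed.

Lemma semiregular_conj (T1 T2 : finType) (h : T1 -> T2) (h' : T2 -> T1)
    (l : nat) (g : T1 -> T1) :
  cancel h h' -> cancel h' h -> semiregular l g -> semiregular l (h \o g \o h').
Proof.
move=> hK h'K [ginj gord]; split=> [x y /= /(can_inj hK) /ginj /(can_inj h'K) // | y].
have iterE n z : iter n (h \o g \o h') z = h (iter n g (h' z)).
  by elim: n z => [|n IHn] z /=; rewrite ?h'K // IHn hK.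
rewrite -(gord (h' y)) /order -(on_card_preimset (onW_bij _ (Bijective h'K hK))).
apply: eq_card => z; rewrite !inE.
apply/fconnect_iterP/fconnect_iterP => -[n zE]; exists n.
  by rewrite zE iterE hK.
by rewrite iterE -zE h'K.
Qed.

Lemma Cfactorization_of_semiregular (T1 T2 : finType) (l : nat) (I : eqType)
    (s : seq I) (g : I -> T1 -> T1) :
  #|T1| = #|T2| -> 1 < l ->
  (forall i, i \in s -> semiregular l (g i)) ->
  (forall u v, u != v -> count (fun i => g i u == v) s = 1) ->
  has_Cfactorization l [set a : T2 * T2 | a.1 != a.2].
Proof.
move=> card12 l_gt1 g_reg g_cover.
pose h x := enum_val (cast_ord card12 (enum_rank x)).
pose h' y := enum_val (cast_ord (esym card12) (enum_rank y)).
have hK : cancel h h' by move=> x; rewrite /h /h' enum_valK cast_ordK enum_rankK.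
have h'K : cancel h' h by move=> y; rewrite /h /h' enum_valK cast_ordKV enum_rankK.
exists [seq fun_arcs (h \o g i \o h') | i <- s]; split.
  move=> _ /mapP [i si ->]; have ireg := semiregular_conj hK h'K (g_reg i si).
  apply: Cfactor_fun_arcs => //; apply/subsetP => a; rewrite in_fun_arcs inE => /eqP <-.
  by rewrite eq_sym -order_gt1 ireg.2.
move=> [u v]; rewrite inE count_map /= => uv.
rewrite -(g_cover (h' u) (h' v)); last by rewrite (can_eq h'K).
by apply: eq_count => i /=; rewrite in_fun_arcs /= -[RHS](can_eq hK) h'K.
Qed.

Section CyclePosition.

Variables (T : finType) (f : T -> T) (m : nat).
Hypothesis f_reg : semiregular m f.

Definition cpos (x : T) : nat := findex f (froot f x) x.

Let fsym : connect_sym (frel f) := fconnect_sym f_reg.1.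

Let root_connect x : fconnect f (froot f x) x.
Proof. by rewrite fsym connect_root. Qed.

Lemma cpos_lt x : cpos x < m.
Proof. by rewrite -(f_reg.2 (froot f x)) findex_max. Qed.

Lemma cpos_next x : cpos (f x) = (cpos x).+1 %% m.
Proof.
rewrite /cpos; have -> : froot f (f x) = froot f x by apply/esym/(rootP fsym)/fconnect1.
rewrite -[in f x](iter_findex (root_connect x)) -iterS.
have := cpos_lt x; rewrite /cpos leq_eqVlt => /orP [/eqP km | km].
  by rewrite km modnn -(f_reg.2 (froot f x)) iter_order ?findex0 //; apply: f_reg.1.
by rewrite modn_small // findex_iter // f_reg.2.
Qed.

End CyclePosition.

(** * Permutations with a cyclic index *)

Lemma index_semiregular (T : finType) (g : T -> T) (L : nat) (I : T -> nat) :
  (forall s, I s < L) -> (forall s, I (g s) = (I s).+1 %% L) ->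
  (forall s, #|fconnect g s| <= L) -> semiregular L g.
Proof.
move=> I_lt I_next conn_le.
have I_iter n s : I (iter n g s) = (I s + n) %% L.
  elim: n => [|n IHn] /=; first by rewrite addn0 modn_small.
  by rewrite I_next IHn -addn1 modnDml -addnA addn1.
have iter_inj s : injective (fun i : 'I_L => iter i g s).
  move=> i j /(congr1 I); rewrite !I_iter => /eqP.
  by rewrite eqn_modDl !modn_small // => /eqP /val_inj.
have orbitE s : [set iter i g s | i : 'I_L] =i fconnect g s.
  have sub : [set iter i g s | i : 'I_L] \subset fconnect g s.
    by apply/subsetP => _ /imsetP [i _ ->]; apply: fconnect_iter.
  apply: (elimT (subset_cardP _) sub); apply/eqP.
  by rewrite eqn_leq (subset_leq_card sub) card_imset // card_ord conn_le.
have orderE s : order g s = L.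
  by rewrite /order -(eq_card (orbitE s)) card_imset ?card_ord.
have iter_L s : iter L g s = s.
  have : iter L g s \in fconnect g s := fconnect_iter g L s.
  rewrite -orbitE => /imsetP [i _ iE].
  move: (congr1 I iE); rewrite !I_iter modnDr -{1}[I s]addn0 => /eqP.
  by rewrite eqn_modDl mod0n modn_small // => /eqP i0; rewrite iE -i0.
split=> // s t; have L_gt0 : 0 < L by apply: leq_ltn_trans (I_lt s).
apply: (can_inj (g := iter L.-1 g)) => u.
by rewrite -iterSr prednK ?iter_L.
Qed.

Lemma fibre_index_semiregular (X V : finType) (f : V -> V) (m : nat)
    (g : X * V -> X * V) (I : X * V -> nat) :
  (forall y, order f y = m) -> (forall s, (g s).2 = s.2 \/ (g s).2 = f s.2) ->
  (forall s, I s < #|X| * m) -> (forall s, I (g s) = (I s).+1 %% (#|X| * m)) ->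
  semiregular (#|X| * m) g.
Proof.
move=> f_order g_fibre I_lt I_next; apply: index_semiregular I_lt I_next _ => s.
have fibre_conn n : fconnect f s.2 (iter n g s).2.
  elim: n => [|n IHn]; first exact: connect0.
  by case: (g_fibre (iter n g s)) => /= ->; last apply: connect_trans IHn (fconnect1 _ _).
rewrite -(f_order s.2) /order -cardsT.
rewrite (eq_card (B := [set y | fconnect f s.2 y])) => [|y]; last by rewrite inE.
rewrite -cardsX; apply/subset_leq_card/subsetP => t /fconnect_iterP [n ->].
by rewrite !inE fibre_conn.
Qed.

Lemma modnS_small (k n : nat) : k < n -> k.+1 %% n = if k == n.-1 then 0 else k.+1.
Proof.
move=> kn; case: eqP => [-> | kn1]; first by rewrite prednK ?modnn //; apply: leq_ltn_trans kn.
by rewrite modn_small //; lia.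
Qed.

(** * Voltage lifts *)

(* With r = 2m mod 3, the voltage is t on the first r positions and 2t on the
   others, plus 1 at position 0: it adds up to t (2m - r) + 1 = 1 (mod 3), and
   at each position t and 2t both run through Z/3 as t does. *)
Definition volt (m t k : nat) : nat := (if k < (2 * m) %% 3 then t else 2 * t) + (k == 0).

Lemma volt_sum m t : 1 < m -> (\sum_(0 <= k < m) volt m t k) %% 3 = 1.
Proof.
move=> m_gt1; set r := (2 * m) %% 3.
have r_le : r <= m by rewrite /r; lia.
rewrite big_split /= (big_cat_nat (leq0n r) r_le) /=.
rewrite (@eq_big_nat _ _ _ 0 r _ (fun=> t)) => [| k /andP [_ kr]]; last by rewrite kr.
rewrite (@eq_big_nat _ _ _ r m _ (fun=> 2 * t)) => [| k /andP [rk _]]; last by rewrite ltnNge rk.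
rewrite !sum_nat_const_nat big_ltn 1?ltnW // big1_seq => [|k /andP [_]]; last first.
  by rewrite mem_iota; case: k.
have -> : (r - 0) * t + (m - r) * (2 * t) = t * ((2 * m) %/ 3) * 3 by rewrite /r; nia.
by rewrite addn0 modnMDl.
Qed.

Lemma volt_count m k i j : i < 3 -> j < 3 ->
  count (fun t => (i + volt m t k) %% 3 == j) (iota 0 3) = 1.
Proof.
rewrite /volt; case: (k < _); case: (k == 0);
by case: i => [|[|[|]]] //; case: j => [|[|[|]]].
Qed.

Section VoltageLift.

Variables (V : finType) (f : V -> V) (m : nat).
Hypothesis f_reg : semiregular m f.

Local Notation pos := (cpos f).

Lemma level_index_semiregular (g : 'I_3 * V -> 'I_3 * V) (I : nat -> nat -> nat) :
  (forall s, (g s).2 = s.2 \/ (g s).2 = f s.2) ->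
  (forall i k, i < 3 -> k < m -> I i k < 3 * m) ->
  (forall s, I (g s).1 (pos (g s).2) = (I s.1 (pos s.2)).+1 %% (3 * m)) ->
  semiregular (3 * m) g.
Proof.
move=> g_fibre I_lt I_next.
have := fibre_index_semiregular (I := fun s : 'I_3 * V => I s.1 (pos s.2)) f_reg.2 g_fibre.
by rewrite card_ord; apply=> // -[i x]; rewrite I_lt ?cpos_lt.
Qed.

Definition volt_lift (w : nat -> nat) (s : 'I_3 * V) : 'I_3 * V :=
  (Ordinal (ltn_pmod (s.1 + w (pos s.2)) (isT : 0 < 3)), f s.2).

Lemma volt_lift_semiregular (w : nat -> nat) :
  (\sum_(0 <= k < m) w k) %% 3 = 1 -> semiregular (3 * m) (volt_lift w).
Proof.
move=> w_sum; pose W k := \sum_(0 <= j < k) w j.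
have W0 : W 0 = 0 by rewrite /W big_geq.
have W_succ k : W k.+1 = W k + w k by rewrite /W big_nat_recr.
(* (i, x) sits in the (i - W k)-th lap of the lifted cycle, where k = pos x;
   the factor 2 is -1 modulo 3. *)
apply: (level_index_semiregular (I := fun i k => k + m * ((i + 2 * W k) %% 3))).
- by right.
- move=> i k _ km; have : (i + 2 * W k) %% 3 < 3 by rewrite ltn_mod.
  by case: (_ %% 3) => [|[|[|]]] //= _; lia.
move=> [i x] /=; have km := cpos_lt f_reg x; rewrite (cpos_next f_reg) modnS_small //.
set k := pos x.
have next_level : ((i + w k) %% 3 + 2 * W (if k == m.-1 then 0 else k.+1)) %% 3
    = if k == m.-1 then ((i + 2 * W k) %% 3).+1 %% 3 else (i + 2 * W k) %% 3.
  case: eqP => [k_last | _]; last by rewrite W_succ; lia.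
  have : (W k + w k) %% 3 = 1 by rewrite -W_succ k_last prednK; lia.
  by rewrite W0; lia.
rewrite next_level; have : (i + 2 * W k) %% 3 < 3 by rewrite ltn_mod.
move: (_ %% 3) => e e_lt; rewrite [RHS]modnS_small; last by case: e e_lt => [|[|[|]]] //; lia.
by case: e e_lt => [|[|[|]]] //= _; rewrite ?modnn; case: (k =P m.-1); case: ifP => /eqP; lia.
Qed.

Lemma volt_lift_count (i j : 'I_3) (x y : V) :
  count (fun t => volt_lift (volt m t) (i, x) == (j, y)) (iota 0 3) = (f x == y).
Proof.
rewrite (@eq_count _ _ (fun t => ((i + volt m t (pos x)) %% 3 == j) && (f x == y))) => [|t].
  by case: (f x == y); [under eq_count do rewrite andbT; rewrite volt_count |
    under eq_count do rewrite andbF; rewrite count_pred0].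
by rewrite /volt_lift xpair_eqE -val_eqE.
Qed.

End VoltageLift.

(** * The five special factors *)

Definition pos_class (m k : nat) : nat := if k == 0 then 0 else if k == m.-1 then 1 else 2.

Lemma pos_class_lt (m k : nat) : pos_class m k < 3.
Proof. by rewrite /pos_class; case: (k == 0); case: (k == m.-1). Qed.

(* In the special factor c, the vertex (i, x) is sent to (j, f x) or to (j, x)
   according as b is true or false, where (j, b) = special_move c cl i and cl
   records whether x is first, last or in the middle of its cycle. *)
Definition special_move (c cl i : nat) : nat * bool :=
  match c, cl, i with
  | 0, 0, 0 => (1, false) | 0, 0, 1 => (0, true) | 0, 0, _ => (2, true)
  | 0, 1, 0 => (1, false) | 0, 1, 1 => (2, true) | 0, 1, _ => (0, true)
  | 0, _, 0 => (0, true)  | 0, _, 1 => (2, true) | 0, _, _ => (1, false)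
  | 1, 0, 0 => (2, true)  | 1, 0, 1 => (2, false) | 1, 0, _ => (0, true)
  | 1, 1, 0 => (0, true)  | 1, 1, 1 => (1, true) | 1, 1, _ => (1, false)
  | 1, _, 0 => (1, false) | 1, _, 1 => (0, true) | 1, _, _ => (2, true)
  | 2, 0, 0 => (2, false) | 2, 0, 1 => (0, false) | 2, 0, _ => (1, true)
  | 2, 1, 0 => (2, false) | 2, 1, 1 => (0, false) | 2, 1, _ => (1, true)
  | 2, _, 0 => (1, true)  | 2, _, 1 => (2, false) | 2, _, _ => (0, false)
  | 3, 0, 0 => (0, true)  | 3, 0, 1 => (1, true) | 3, 0, _ => (0, false)
  | 3, 1, 0 => (1, true)  | 3, 1, 1 => (2, false) | 3, 1, _ => (2, true)
  | 3, _, 0 => (2, false) | 3, _, 1 => (1, true) | 3, _, _ => (0, true)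
  | _, 0, 0 => (1, true)  | _, 0, 1 => (2, true) | _, 0, _ => (1, false)
  | _, 1, 0 => (2, true)  | _, 1, 1 => (0, true) | _, 1, _ => (0, false)
  | _, _, 0 => (2, true)  | _, _, 1 => (0, false) | _, _, _ => (1, true)
  end.

Lemma special_move_count (cl i j : nat) : cl < 3 -> i < 3 -> j < 3 ->
  count (fun c => special_move c cl i == (j, false)) (iota 0 5) = (i != j) /\
  count (fun c => special_move c cl i == (j, true)) (iota 0 5) = 1.
Proof.
by case: cl => [|[|[|]]] //; case: i => [|[|[|]]] //; case: j => [|[|[|]]].
Qed.

(* Rank of (i, x) on the 3m-cycle of special factor c through it, for x at
   position k; the zigzag of factor 4 needs m odd. *)
Definition special_index (m c i k : nat) : nat :=
  let M := m %/ 2 in let q := k %/ 2 in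
  match c, i with
  | 0, 0 => if k == 0 then 0 else k.+1
  | 0, 1 => if k == 0 then 1 else if k == m.-1 then m.+1 else m + 2 * k + 2
  | 0, _ => if k == 0 then m + 2 else m + 2 * k + 1
  | 1, 0 => if k == 0 then 0 else m + 2 * k + 1
  | 1, 1 => if k == 0 then m.+1 else if k == m.-1 then m else m + 2 * k + 2
  | 1, _ => if k == 0 then m + 2 else k
  | 2, 0 => if k == 0 then 0 else if k == m.-1 then 3 * m - 3 else 3 * k + 1
  | 2, 1 => if k == 0 then 3 * m - 1 else 3 * k - 1
  | 2, _ => if k == 0 then 1 else if k == m.-1 then 3 * m - 2 else 3 * k
  | 3, 0 => if k == 0 then 0 else 2 * k - 1
  | 3, 1 => 2 * m - 2 + k
  | 3, _ => if k == 0 then 3 * m - 1 else if k == m.-1 then 3 * m - 2 else 2 * k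
  | _, 0 => if k == 0 then 0 else if k == m.-1 then 3 * M + 1
            else if k %% 2 == 1 then 3 * q + 2 else 3 * q + 3 * M + 3
  | _, 1 => if k == 0 then 3 * M + 3
            else if k %% 2 == 1 then 3 * q + 1 else 3 * q + 3 * M + 2
  | _, _ => if k == 0 then 3 * M + 2
            else if k %% 2 == 1 then 3 * q + 3 * M + 4 else 3 * q
  end.

Lemma special_step (m c i k : nat) : 2 < m -> odd m -> c < 5 -> i < 3 -> k < m ->
  let jb := special_move c (pos_class m k) i in
  [/\ jb.1 < 3, special_index m c i k < 3 * m &
      special_index m c jb.1 (if jb.2 then k.+1 %% m else k)
        = (special_index m c i k).+1 %% (3 * m)].
Proof.
move=> m_gt2 m_odd c_lt i_lt k_lt.
suff : let jb := special_move c (pos_class m k) i in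
  [/\ jb.1 < 3, special_index m c i k < 3 * m &
      special_index m c jb.1 (if jb.2 then (if k == m.-1 then 0 else k.+1) else k)
        = if special_index m c i k == (3 * m).-1 then 0 else (special_index m c i k).+1].
  by move=> /= [j_lt I_lt I_next]; rewrite (modnS_small k_lt) (modnS_small I_lt).
have c_cases : c = 0 \/ c = 1 \/ c = 2 \/ c = 3 \/ c = 4 by lia.
have i_cases : i = 0 \/ i = 1 \/ i = 2 by lia.
have m_mod2 : m %% 2 = 1 by rewrite modn2 m_odd.
have first_mid : (0 == m.-1) = false by lia.
rewrite /= /pos_class; case: (boolP (k == 0)) => [/eqP -> | k_gt0].
  rewrite ?first_mid; case: c_cases => [->|[->|[->|[->|->]]]]; case: i_cases => [->|[->|->]];
  rewrite /special_index /= ?first_mid; repeat case: ifP => ?; split; lia.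
case: (boolP (k == m.-1)) => [k_last | k_mid].
  case: c_cases => [->|[->|[->|[->|->]]]]; case: i_cases => [->|[->|->]];
  rewrite /special_index /= ?k_last ?(negbTE k_gt0); repeat case: ifP => ?; split; lia.
case: c_cases => [->|[->|[->|[->|->]]]]; case: i_cases => [->|[->|->]];
rewrite /special_index /= ?(negbTE k_gt0) ?(negbTE k_mid); repeat case: ifP => ?; split; lia.
Qed.

Section SpecialFactors.

Variables (V : finType) (f : V -> V) (m : nat).
Hypotheses (f_reg : semiregular m f) (m_gt2 : 2 < m) (m_odd : odd m).

Local Notation pos := (cpos f).

Definition special (c : nat) (s : 'I_3 * V) : 'I_3 * V :=
  let jb := special_move c (pos_class m (pos s.2)) s.1 in
  (inord jb.1, if jb.2 then f s.2 else s.2).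

Lemma special_semiregular (c : nat) : c < 5 -> semiregular (3 * m) (special c).
Proof.
move=> c_lt; apply: (level_index_semiregular f_reg (I := special_index m c)).
- by move=> s; rewrite /special; case: (special_move _ _ _).2; [right | left].
- by move=> i k i_lt k_lt; case: (special_step m_gt2 m_odd c_lt i_lt k_lt).
move=> [i x]; have [j_lt _ <-] := special_step m_gt2 m_odd c_lt (ltn_ord i) (cpos_lt f_reg x).
by rewrite /special /= inordK //; case: (special_move _ _ _).2; rewrite ?(cpos_next f_reg).
Qed.

Lemma special_count (i j : 'I_3) (x y : V) :
  count (fun c => special c (i, x) == (j, y)) (iota 0 5)
    = if y == x then i != j else f x == y.
Proof.
have fx : f x != x by rewrite -order_gt1 f_reg.2; apply: ltn_trans m_gt2.
have [stay advance] := special_move_count (pos_class_lt m (pos x)) (ltn_ord i) (ltn_ord j).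
rewrite (@eq_in_count _ _ (fun c =>
    (special_move c (pos_class m (pos x)) i == (val j, false)) && (y == x)
    || (special_move c (pos_class m (pos x)) i == (val j, true)) && (f x == y))).
  case: eqP => [-> | _]; rewrite ?(negbTE fx).
    by under eq_count do rewrite andbT andbF orbF.
  case: (f x == y); last by under eq_count do rewrite !andbF; rewrite count_pred0.
  by under eq_count do rewrite andbF andbT.
move=> c; rewrite mem_iota => /andP [_ c_lt].
have [j_lt _ _] := special_step m_gt2 m_odd c_lt (ltn_ord i) (cpos_lt f_reg x).
rewrite /special /=; case: special_move j_lt => k [] /= k_lt;
by rewrite !xpair_eqE -val_eqE /= inordK //=; case: (k == j); rewrite /= ?orbF // eq_sym.
Qed.

End SpecialFactors.

Lemma Cfactorization_triple (V T : finType) (m : nat) (I : eqType) (i0 : I)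
    (s : seq I) (f : I -> V -> V) :
  2 < m -> odd m -> #|T| = 3 * #|V| ->
  (forall i, i \in i0 :: s -> semiregular m (f i)) ->
  (forall u v, u != v -> count (fun i => f i u == v) (i0 :: s) = 1) ->
  has_Cfactorization (3 * m) [set a : T * T | a.1 != a.2].
Proof.
move=> m_gt2 m_odd card_T f_reg f_cover.
have f0_reg := f_reg i0 (mem_head _ _).
pose g (k : nat + nat * I) :=
  match k with inl c => special (f i0) m c | inr (t, i) => volt_lift (f i) (volt m t) end.
apply: (@Cfactorization_of_semiregular _ _ _ _
   (map inl (iota 0 5) ++ [seq inr (t, i) | i <- s, t <- iota 0 3]) g).
- by rewrite card_prod card_ord.
- lia.
- move=> k; rewrite mem_cat => /orP [/mapP [c c_in ->] | /allpairsP [[i t] [i_in t_in ->]]].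
    by apply: special_semiregular => //; move: c_in; rewrite mem_iota.
  apply: volt_lift_semiregular; first by apply: f_reg; rewrite inE i_in orbT.
  by apply: volt_sum; apply: ltnW.
move=> [i x] [j y] ijxy; rewrite count_cat count_map count_flatten -map_comp.
rewrite (eq_map (g := fun i' => nat_of_bool (f i' x == y))) => [|i']; last exact: volt_lift_count.
rewrite sumn_count (special_count f0_reg) //.
case: (y =P x) ijxy => [-> | /eqP yx] ijxy; last by rewrite -(f_cover x y) // eq_sym.
rewrite (@eq_in_count _ _ pred0) => [|i' i'_in]; last first.
  apply/negbTE; rewrite -order_gt1 (f_reg i' _).2 ?inE ?i'_in ?orbT //.
  by apply: ltn_trans m_gt2.
by rewrite count_pred0 addn0; case: (i =P j) ijxy => // ->; rewrite eqxx.
Qed.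

Theorem mainTheorem9 (m : nat) :
  0 < m -> odd m ->
  has_Cfactorization m (Kstar_arcs (2 * m)) ->
  has_Cfactorization (3 * m) (Kstar_arcs (6 * m)).
Proof.
move=> m_gt0 m_odd [Fs [Fs_factor Fs_cover]].
have m2_gt1 : 1 < 2 * m by lia.
pose u0 : 'I_(2 * m) := Ordinal (ltnW m2_gt1); pose u1 : 'I_(2 * m) := Ordinal m2_gt1.
have Fs_reg F : F \in Fs -> semiregular m (fsucc F).
  by move=> /Fs_factor /Cfactor_semiregular [].
have fsucc_cover u v : u != v -> count (fun F => fsucc F u == v) Fs = 1.
  move=> uv; rewrite -[RHS](Fs_cover (u, v)) ?inE //; apply: eq_in_count => F /Fs_factor.
  by move=> /Cfactor_semiregular [_ {2}->]; rewrite in_fun_arcs.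
case: Fs Fs_factor Fs_cover Fs_reg fsucc_cover => [_ _ _ | F0 rest Fs_factor _ Fs_reg fsucc_cover].
  by move/(_ u0 u1 isT).
have m_gt1 := Cfactor_length_gt1 u0 (Fs_factor F0 (mem_head _ _)).
have m_gt2 : 2 < m by rewrite ltn_neqAle m_gt1 andbT; apply: contraTneq m_odd => <-.
apply: (Cfactorization_triple (T := 'I_(6 * m)) m_gt2 m_odd _ Fs_reg fsucc_cover).
by rewrite !card_ord; lia.
Qed.
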